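(* Let $V\subseteq\gamma_D$ be finite with $|V|\ge D+1$, let $T$ be a triangulation of $\mathrm{conv}(V)$ all of whose vertices lie in $V$, and let $\sigma\subseteq V$ be a $k$-simplex with $\lceil D/2\rceil\le k\le D$. If $T$ contains the $\lceil D/2\rceil$-dimensional skeleton of $\sigma$ (all faces of $\sigma$ of dimension at most $\lceil D/2\rceil$), then $\sigma\in T$.
   Context: $\gamma_D=\{(t,t^2,\dots,t^D):t\in\mathbb{R}\}$ is the moment curve in $\mathbb{R}^D$. A $k$-simplex on $\gamma_D$ is $\mathrm{conv}(\sigma)$ for $\sigma\subseteq\gamma_D$ with $|\sigma|=k+1$. A triangulation of a polytope is a geometric simplicial complex whose union is the polytope. *)

From HB Require Import structures.
From mathcomp Require Import all_boot all_order all_algebra.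
From mathcomp Require Import finmap.
From mathcomp Require Import reals.
Unset Printing Implicit Defensive.
Import Order.TTheory GRing.Theory Num.Theory.
Local Open Scope ring_scope.
Local Open Scope fset_scope.

Definition moment (R : realType) (D : nat) (t : R) : 'rV[R]_D :=
  \row_(i < D) t ^+ i.+1.

Definition conv (R : realType) (D : nat) (S : {fset R}) (x : 'rV[R]_D) : Prop :=
  exists lam : R -> R,
    [/\ forall t, t \in S -> 0 <= lam t,
        \sum_(t <- S) lam t = 1
      & x = \sum_(t <- S) lam t *: @moment R D t].

(* T (a finite family of vertex sets, identified by their moment-curve
   parameters) is a triangulation of conv(V) all of whose vertices lie in V:
   a geometric simplicial complex (every member is a simplex, i.e. at most
   D+1 points of gamma_D, which are automatically affinely independent;
   closed under taking nonempty faces; any two simplices meet in a common face)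
   whose union is conv(V). *)
Definition triangulation (R : realType) (D : nat) (V : {fset R})
    (T : {fset {fset R}}) : Prop :=
  [/\ forall s, s \in T -> s `<=` V,
      forall s, s \in T -> (0 < #|` s | <= D.+1)%N,
      forall s u, s \in T -> u `<=` s -> (0 < #|` u |)%N -> u \in T,
      forall s t, s \in T -> t \in T ->
        exists u : {fset R}, [/\ u `<=` s, u `<=` t &
          forall x, (@conv R D s x /\ @conv R D t x) <-> @conv R D u x]
    & forall x, @conv R D V x <-> exists2 s, s \in T & @conv R D s x].

(** Let b be the barycenter of sigma and s a simplex of T containing b.  If
    sigma is not a face of s, the two barycentric expressions of b yield a
    nonzero affine dependence c among the points of sigma u s, positive only on
    sigma and negative only on s.  A nonzero affine dependence of points of the
    moment curve changes sign at least D + 1 times: otherwise a polynomial of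
    degree at most D with one root between consecutive sign changes would have
    positive pairing with c.  So c alternates in sign on some D + 2 of its
    points; the unique dependence of these D + 2 points alternates in the same
    way and gives a Radon partition P, N with P in sigma, N in s and
    |P| <= ceil(D/2) + 1.  By hypothesis P is in T, so the Radon point lies in
    conv u for the common face u of P and s.  But u and N are disjoint subsets
    of s, and D + 1 points of the moment curve are affinely independent, so
    conv u and conv N are disjoint. *)

From mathcomp Require Import all_boot all_order all_algebra.
From mathcomp Require Import finmap reals lra.
Import Order.TTheory GRing.Theory Num.Theory.
Set Implicit Arguments.
Unset Strict Implicit.
Unset Printing Implicit Defensive.
Local Open Scope fset_scope.
Local Open Scope ring_scope.

Section MomentDependence.
Variables (R : fieldType) (D : nat).

(* [c] is an affine dependence of the points of the moment curve with
   parameters in [ts]; the equation for [j = 0] says that the coefficients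
   sum to 0. *)
Definition moment_dep (ts : seq R) (c : R -> R) :=
  forall j, (j <= D)%N -> \sum_(t <- ts) c t * t ^+ j = 0.

Lemma moment_dep_horner ts c (f : {poly R}) :
  moment_dep ts c -> (size f <= D.+1)%N -> \sum_(t <- ts) c t * f.[t] = 0.
Proof.
move=> c_dep f_size.
under eq_bigr => t _ do rewrite horner_coef mulr_sumr.
rewrite exchange_big big1 //= => i _.
under eq_bigr => t _ do rewrite mulrCA.
by rewrite -mulr_sumr c_dep ?mulr0 // -ltnS (leq_trans (ltn_ord i)).
Qed.

Lemma moment_dep_eq0 ts c : uniq ts -> (size ts <= D.+1)%N ->
  moment_dep ts c -> {in ts, forall t, c t = 0}.
Proof.
move=> ts_uniq ts_size c_dep t t_ts.
pose f := \prod_(u <- rem t ts) ('X - u%:P).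
have f_size : (size f <= D.+1)%N.
  by rewrite size_prod_XsubC size_rem // prednK //; case: (ts) t_ts.
have f_root u : u \in rem t ts -> f.[u] = 0.
  move=> u_rem; apply/eqP; rewrite /f horner_prod prodf_seq_eq0.
  by apply/hasP; exists u; rewrite // hornerXsubC subrr eqxx.
have ft_neq0 : f.[t] != 0.
  rewrite /f horner_prod prodf_seq_neq0; apply/allP => u u_rem.
  by rewrite hornerXsubC subr_eq0; apply: contraTneq u_rem => <-; rewrite mem_rem_uniqF.
have := moment_dep_horner c_dep f_size.
rewrite (bigD1_seq t) //= big1_seq => [|u /andP[u_t u_ts]]; last first.
  by rewrite f_root ?mulr0 // (mem_rem_uniq _ ts_uniq) inE u_t.
by rewrite addr0 => /eqP; rewrite mulf_eq0 (negbTE ft_neq0) orbF => /eqP.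
Qed.

Lemma exists_moment_dep ts : uniq ts -> (D.+1 < size ts)%N ->
  exists2 d, moment_dep ts d & has (fun t => d t != 0) ts.
Proof.
move=> ts_uniq ts_size.
pose A : 'M[R]_(size ts, D.+1) := \matrix_(i, j) ts`_i ^+ j.
have /rowV0Pn[v] : kermx A != 0.
  by rewrite -mxrank_eq0 mxrank_ker subn_eq0 -ltnNge (leq_ltn_trans (rank_leq_col A)).
rewrite sub_kermx => /eqP vA0 v_neq0.
pose d t := if insub (index t ts) is Some i then v 0 i else 0.
have dE (i : 'I_(size ts)) : d ts`_i = v 0 i by rewrite /d index_uniq // valK.
exists d => [j j_le|].
  have := congr1 (fun M : 'M_(1, D.+1) => M 0 (@Ordinal D.+1 j j_le)) vA0.
  rewrite !mxE => vA0j; rewrite (big_nth 0) big_mkord -[RHS]vA0j.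
  by apply: eq_bigr => i _; rewrite dE mxE.
apply: contraNT v_neq0 => /hasPn d_eq0; apply/eqP/rowP => i.
by rewrite mxE -dE; apply/eqP; rewrite -[_ == _]negbK d_eq0 ?mem_nth.
Qed.

End MomentDependence.

Section SignChanges.
Variables (R : realFieldType) (D : nat).
Implicit Types (c d : R -> R) (ts xs : seq R) (pos : bool).

Definition has_sign pos (y : R) := if pos then 0 < y else y < 0.

Lemma has_signVN pos y : y != 0 -> has_sign pos y \/ has_sign (~~ pos) y.
Proof. by rewrite neq_lt => /orP[]; case: pos; auto. Qed.

Lemma has_signN pos y : has_sign (~~ pos) (- y) = has_sign pos y.
Proof. by case: pos; rewrite /= ?oppr_gt0 ?oppr_lt0. Qed.

Lemma has_sign_mul_gt0 pos y z : has_sign pos y -> has_sign pos z -> 0 < y * z.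
Proof. by case: pos => /= y_sg z_sg; [apply: mulr_gt0 | rewrite nmulr_rgt0]. Qed.

Fixpoint alternating c pos xs : bool :=
  if xs is x :: xs' then has_sign pos (c x) && alternating c (~~ pos) xs'
  else true.

Lemma alternatingN c pos xs :
  alternating (fun t => - c t) (~~ pos) xs = alternating c pos xs.
Proof. by elim: xs pos => //= x xs IH pos; rewrite has_signN IH. Qed.

Lemma alternating_mul_gt0 c d pos xs :
  alternating c pos xs -> alternating d pos xs -> {in xs, forall x, 0 < c x * d x}.
Proof.
elim: xs pos => [|y xs IH] pos //= /andP[cy c_alt] /andP[dy d_alt] x.
by rewrite inE => /orP[/eqP-> | /(IH _ c_alt d_alt)]; first exact: has_sign_mul_gt0 cy dy.
Qed.

Lemma count_alternating_gt0 c pos xs : alternating c pos xs ->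
  (count (fun x => (0 < c x)%R) xs <= if pos then uphalf (size xs) else (size xs)./2)%N.
Proof.
elim: xs pos => [|y xs IH] [] //= /andP[cy /IH]; first by rewrite cy.
by rewrite (lt_gtF cy).
Qed.

Lemma has_alternating_gt0 c pos xs :
  alternating c pos xs -> (1 < size xs)%N -> has (fun x => 0 < c x) xs.
Proof.
case: xs => [|x [|y xs]] //= /and3P[cx cy _] _.
by case: pos cx cy => /= cx cy; rewrite ?cx ?cy ?orbT.
Qed.

(* The polynomial has one root between any two consecutive sign changes of
   [c], all of them to the right of [p]. *)
Lemma alternating_or_sign_poly c pos p L ts :
  sorted <%R ts -> all (fun t => p < t) ts -> (0 < L)%N ->
  (exists2 xs, subseq xs ts & size xs = L /\ alternating c pos xs) \/
  exists2 f : {poly R}, (size f <= L)%N &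
    {in ts, forall t, c t != 0 -> 0 < c t * f.[t]} /\
    (forall x, x <= p -> has_sign (~~ pos) f.[x]).
Proof.
elim: ts pos p L => [|t ts IH] pos p L ts_sorted ts_gt_p L_gt0.
  right; exists (if pos then -1 else 1)%:P.
    by rewrite size_polyC (leq_trans (leq_b1 _)).
  by split=> // x _; rewrite hornerC; case: pos; rewrite /= ?oppr_lt0 ?ltr01.
move: ts_gt_p => /= /andP[p_lt_t _].
have ts_gt_t : all (fun u => t < u) ts.
  by move: ts_sorted; rewrite /= (path_sortedE lt_trans) => /andP[].
have {}ts_sorted : sorted <%R ts := path_sorted ts_sorted.
have ts_gt_p : all (fun u => p < u) ts.
  by apply/allP => u /(allP ts_gt_t); apply: lt_trans.
have sub_cons xs : subseq xs ts -> subseq xs (t :: ts).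
  by move/subseq_trans; apply; apply: subseq_cons.
have [ct0|/(has_signVN pos)[ct_sg|ct_sg]] := eqVneq (c t) 0.
- have [[xs /sub_cons]|[f f_size [f_sg f_left]]] := IH pos p L ts_sorted ts_gt_p L_gt0.
    by left; exists xs.
  right; exists f => //; split=> // u.
  by rewrite inE => /orP[/eqP-> | /f_sg //]; rewrite ct0 eqxx.
- case: L L_gt0 => [//|[_|L _]].
    by left; exists [:: t]; rewrite /= ?eqxx ?sub0seq ?ct_sg.
  have [[xs xs_sub [xs_size xs_alt]]|[g g_size [g_sg g_left]]] :=
    IH (~~ pos) t L.+1 ts_sorted ts_gt_t isT.
    by left; exists (t :: xs); rewrite /= ?eqxx ?xs_size ?ct_sg.
  rewrite negbK in g_left; right.
  pose q := (p + t) / 2; have p_lt_q : p < q by rewrite /q; lra.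
  have q_lt_t : q < t by rewrite /q; lra.
  exists (g * ('X - q%:P)).
    by rewrite (leq_trans (size_mul_leq _ _)) // size_XsubC addn2.
  split=> [u|x x_le_p]; rewrite hornerM hornerXsubC.
    rewrite inE => /orP[/eqP-> _ | u_ts /(g_sg u u_ts) cg_gt0].
      by have := has_sign_mul_gt0 ct_sg (g_left t (lexx t)); nra.
    by have := allP ts_gt_t u u_ts; nra.
  have := g_left x (le_trans x_le_p (ltW p_lt_t)).
  by case: pos {ct_sg g_left} => /=; nra.
- have [[xs /sub_cons]|[f f_size [f_sg f_left]]] := IH pos t L ts_sorted ts_gt_t L_gt0.
    by left; exists xs.
  right; exists f => //; split=> [u|x x_le_p]; last exact/f_left/(le_trans x_le_p)/ltW.
  rewrite inE => /orP[/eqP-> _ | /f_sg //].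
  exact: has_sign_mul_gt0 ct_sg (f_left t (lexx t)).
Qed.

Lemma alternating_or_sign_poly_free c L ts : sorted <%R ts -> (0 < L)%N ->
  (exists pos, exists2 xs, subseq xs ts & size xs = L /\ alternating c pos xs) \/
  exists2 f : {poly R}, (size f < L)%N & {in ts, forall t, c t != 0 -> 0 < c t * f.[t]}.
Proof.
elim: ts L => [|t ts IH] L ts_sorted L_gt0; first by right; exists 0; rewrite ?size_poly0.
have ts_gt_t : all (fun u => t < u) ts.
  by move: ts_sorted; rewrite /= (path_sortedE lt_trans) => /andP[].
have {}ts_sorted : sorted <%R ts := path_sorted ts_sorted.
have [ct0|ct_neq0] := eqVneq (c t) 0.
  have [[pos [xs xs_sub xs_alt]]|[f f_size f_sg]] := IH L ts_sorted L_gt0.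
    by left; exists pos, xs => //; apply: (subseq_trans xs_sub); apply: subseq_cons.
  right; exists f => // u.
  by rewrite inE => /orP[/eqP-> | /f_sg //]; rewrite ct0 eqxx.
have ct_sg : has_sign (0 < c t) (c t).
  by rewrite /has_sign; case: ifP => // /negbT; rewrite -leNgt le_eqVlt (negbTE ct_neq0).
case: L L_gt0 => [//|[_|L _]].
  by left; exists (0 < c t), [:: t]; rewrite /= ?eqxx ?sub0seq ?ct_sg.
have [[xs xs_sub [xs_size xs_alt]]|[g g_size [g_sg g_left]]] :=
  alternating_or_sign_poly c (~~ (0 < c t)) (L := L.+1) ts_sorted ts_gt_t isT.
  by left; exists (0 < c t), (t :: xs); rewrite /= ?eqxx ?xs_size ?ct_sg.
right; exists g => // u; rewrite inE => /orP[/eqP-> _ | /g_sg //].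
by apply: has_sign_mul_gt0 ct_sg _; rewrite -[0 < c t]negbK g_left.
Qed.

Lemma moment_dep_alternating c ts : sorted <%R ts -> moment_dep D ts c ->
  has (fun t => c t != 0) ts ->
  exists pos, exists2 xs, subseq xs ts & size xs = D.+2 /\ alternating c pos xs.
Proof.
move=> ts_sorted c_dep /hasP[t t_ts ct_neq0].
have [//|[f f_size f_sg]] := alternating_or_sign_poly_free c (L := D.+2) ts_sorted isT.
exfalso; move: (moment_dep_horner c_dep f_size) => /eqP; apply/negP.
rewrite big_seq_cond psumr_neq0; first by apply/hasP; exists t; rewrite ?t_ts ?f_sg.
move=> u /andP[u_ts _]; have [->|cu_neq0] := eqVneq (c u) 0; first by rewrite mul0r.
exact/ltW/f_sg.
Qed.

Lemma alternating_moment_dep pos xs : sorted <%R xs -> size xs = D.+2 ->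
  exists2 d, moment_dep D xs d & alternating d pos xs.
Proof.
move=> xs_sorted xs_size.
have [|d d_dep d_neq0] := exists_moment_dep (D := D) (lt_sorted_uniq xs_sorted).
  by rewrite xs_size.
have [pos' [ys ys_sub [ys_size ys_alt]]] := moment_dep_alternating xs_sorted d_dep d_neq0.
have ys_xs : ys = xs by apply/eqP; rewrite -(size_subseq_leqif ys_sub).2 ys_size xs_size.
rewrite {}ys_xs in ys_alt.
have [<-|/negPf pos'_neq] := eqVneq pos' pos; first by exists d.
exists (fun t => - d t).
  by move=> j j_le; under eq_bigr do rewrite mulNr; rewrite sumrN d_dep ?oppr0.
by rewrite -[pos]negbK alternatingN; case: pos pos' pos'_neq ys_alt => [] [].
Qed.

End SignChanges.

Section FsetOfSeq.
Variables (K : choiceType) (xs : seq K) (p : pred K).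
Hypothesis xs_uniq : uniq xs.

Lemma big_fset_seq (V : Type) (idx : V) (op : Monoid.com_law idx) (F : K -> V) :
  \big[op/idx]_(t <- [fset t in xs | p t]) F t = \big[op/idx]_(t <- xs | p t) F t.
Proof. by rewrite big_fset /= /enum_finmem /= undup_id. Qed.

Lemma card_fset_seq : #|` [fset t in xs | p t]| = count p xs.
Proof. by rewrite card_fset_sum1 big_fset_seq -big_filter sum1_size size_filter. Qed.

End FsetOfSeq.

Section ConvexHulls.
Variables (R : realType) (D : nat).
Implicit Types (A B C : {fset R}) (f la mu c d : R -> R) (xs : seq R).

Definition extend0 A f t := if t \in A then f t else 0.

Lemma big_extend0 (V : nmodType) (F : R -> R -> V) A C f :
  A `<=` C -> (forall t, F 0 t = 0) ->
  \sum_(t <- C) F (extend0 A f t) t = \sum_(t <- A) F (f t) t.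
Proof.
move=> sAC F0; rewrite -(big_fset_incl _ sAC) => [|t _ /negbTE tA].
  by apply: eq_fbigr => t tA _; rewrite /extend0 tA.
by rewrite /extend0 tA.
Qed.
Arguments big_extend0 {V} F {A C f}.

Lemma extend0_subr_gt0 A B la mu t : {in B, forall t, 0 <= mu t} ->
  0 < extend0 A la t - extend0 B mu t -> t \in A.
Proof.
rewrite /extend0 => mu_ge0; case: (t \in A) => //; rewrite sub0r oppr_gt0.
by case: ifP => [/mu_ge0 mut_ge0|_]; rewrite ltNge ?mut_ge0 ?lexx.
Qed.

Lemma extend0_subr_lt0 A B la mu t : {in A, forall t, 0 <= la t} ->
  extend0 A la t - extend0 B mu t < 0 -> t \in B.
Proof.
rewrite /extend0 => la_ge0; case: (t \in B) => //; rewrite subr0.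
by case: ifP => [/la_ge0 lat_ge0|_]; rewrite ltNge ?lat_ge0 ?lexx.
Qed.

Lemma conv_fsubset A C x : A `<=` C -> conv R D A x -> conv R D C x.
Proof.
move=> sAC [la [la_ge0 la1 ->]]; exists (extend0 A la); split.
- by move=> t _; rewrite /extend0; case: ifP => // /la_ge0.
- by rewrite (big_extend0 (fun a _ => a)).
- by rewrite (big_extend0 (fun a t => a *: moment R D t)) // => t; rewrite scale0r.
Qed.

Lemma conv_pos_weights A : (0 < #|` A|)%N ->
  exists la, [/\ {in A, forall t, 0 < la t}, \sum_(t <- A) la t = 1
               & conv R D A (\sum_(t <- A) la t *: moment R D t)].
Proof.
move=> A_gt0; pose la (t : R) := (#|` A|%:R : R)^-1.
have la_gt0 t : 0 < la t by rewrite invr_gt0 ltr0n.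
have la1 : \sum_(t <- A) la t = 1.
  rewrite big_const_seq count_predT iter_addr_0 -[_^-1 *+ _]mulr_natr.
  by rewrite mulVf ?pnatr_eq0 -?lt0n.
by exists la; split => //; exists la; split => // t _; apply: ltW.
Qed.

Lemma moment_sum_mxE xs la (i : 'I_D) :
  (\sum_(t <- xs) la t *: moment R D t) 0 i = \sum_(t <- xs) la t * t ^+ i.+1.
Proof. by rewrite summxE; apply: eq_bigr => t _; rewrite !mxE. Qed.

Lemma conv_moment_dep A B la mu :
  \sum_(t <- A) la t = 1 -> \sum_(t <- B) mu t = 1 ->
  \sum_(t <- A) la t *: moment R D t = \sum_(t <- B) mu t *: moment R D t ->
  moment_dep D (A `|` B) (fun t => extend0 A la t - extend0 B mu t).
Proof.
move=> la1 mu1 la_mu j j_le; under eq_bigr do rewrite mulrBl.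
rewrite sumrB !(big_extend0 (fun a t => a * t ^+ j)) ?fsubsetUl ?fsubsetUr //;
  try by move=> t; rewrite mul0r.
apply/eqP; rewrite subr_eq0; apply/eqP; case: j j_le => [|i] i_lt.
  under eq_bigr do rewrite expr0 mulr1.
  by under [RHS]eq_bigr do rewrite expr0 mulr1; rewrite la1 mu1.
by rewrite -!(moment_sum_mxE _ _ (Ordinal i_lt)) la_mu.
Qed.

Lemma moment_conv_disjoint A B x : [disjoint A & B] -> (#|` A `|` B| <= D.+1)%N ->
  conv R D A x -> conv R D B x -> False.
Proof.
move=> AB AB_card [la [_ la1 ->]] [mu [_ mu1 la_mu]].
have c0 := moment_dep_eq0 (fset_uniq _) AB_card (conv_moment_dep la1 mu1 la_mu).
have la0 t : t \in A -> la t = 0.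
  move=> tA; have := c0 t; rewrite in_fsetU tA /extend0 tA (negbTE (fdisjointP AB t tA)).
  by rewrite subr0; apply.
by move: (oner_neq0 R); rewrite -la1 big_seq big1 ?eqxx // => t /la0.
Qed.

Lemma moment_dep_radon d xs : uniq xs -> moment_dep D xs d ->
  has (fun t => 0 < d t) xs ->
  exists x, conv R D [fset t in xs | 0 < d t] x /\ conv R D [fset t in xs | d t < 0] x.
Proof.
move=> xs_uniq d_dep d_pos.
have neg_pos j : (j <= D)%N ->
    \sum_(t <- xs | d t < 0) d t * t ^+ j = - \sum_(t <- xs | 0 < d t) d t * t ^+ j.
  move=> j_le; apply/eqP; rewrite -addr_eq0 -[X in _ == X](d_dep j j_le).
  rewrite [X in X + _]big_mkcond [X in _ + X]big_mkcond -big_split /=; apply/eqP.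
  apply: eq_bigr => t _.
  by case: (ltgtP (d t) 0) => [||->]; rewrite ?addr0 ?add0r ?mul0r ?addr0.
pose S := \sum_(t <- xs | 0 < d t) d t.
have S_gt0 : 0 < S.
  rewrite lt_def sumr_ge0 ?andbT => [|t /ltW //].
  by rewrite psumr_neq0 => [|t /ltW //]; apply: sub_has d_pos => t ->.
have sum_neg : \sum_(t <- xs | d t < 0) d t = - S.
  have := neg_pos 0%N isT.
  by under eq_bigr do rewrite expr0 mulr1; under [in RHS]eq_bigr do rewrite expr0 mulr1.
exists (\sum_(t <- [fset t in xs | 0 < d t]) (d t / S) *: moment R D t); split.
  exists (fun t => d t / S); split => //.
    by move=> t; rewrite inE => /andP[_ dt]; rewrite divr_ge0 // ltW.
  by rewrite big_fset_seq // -mulr_suml divff // gt_eqF.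
exists (fun t => - d t / S); split.
- by move=> t; rewrite inE => /andP[_ dt]; rewrite divr_ge0 ?oppr_ge0 // ltW.
- by rewrite big_fset_seq // -mulr_suml sumrN sum_neg opprK divff // gt_eqF.
apply/rowP => i; rewrite !moment_sum_mxE !big_fset_seq //.
under eq_bigr do rewrite mulrAC; under [RHS]eq_bigr do rewrite mulrAC mulNr.
by rewrite -!mulr_suml sumrN neg_pos // opprK.
Qed.

Lemma alternating_radon c pos xs : sorted <%R xs -> size xs = D.+2 ->
  alternating c pos xs ->
  exists x, conv R D [fset t in xs | 0 < c t] x /\ conv R D [fset t in xs | c t < 0] x.
Proof.
move=> xs_sorted xs_size c_alt.
have [d d_dep d_alt] := alternating_moment_dep pos xs_sorted xs_size.
have same_sign t : t \in xs -> (0 < c t) = (0 < d t) /\ (c t < 0) = (d t < 0).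
  by move/(alternating_mul_gt0 c_alt d_alt) => cd_gt0; split; apply/idP/idP; nra.
have -> : [fset t in xs | 0 < c t] = [fset t in xs | 0 < d t].
  apply/fsetP => t; rewrite !inE.
  by case t_xs: (t \in xs); rewrite //= (same_sign t t_xs).1.
have -> : [fset t in xs | c t < 0] = [fset t in xs | d t < 0].
  apply/fsetP => t; rewrite !inE.
  by case t_xs: (t \in xs); rewrite //= (same_sign t t_xs).2.
apply: moment_dep_radon (lt_sorted_uniq xs_sorted) d_dep _.
by apply: has_alternating_gt0 d_alt _; rewrite xs_size.
Qed.

Lemma moment_dep_radon_uphalf c ts : uniq ts -> moment_dep D ts c ->
  has (fun t => c t != 0) ts ->
  exists P N x, [/\ {in P, forall t, 0 < c t}, {in N, forall t, c t < 0},
    (0 < #|` P| <= (uphalf D).+1)%N, conv R D P x & conv R D N x].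
Proof.
move=> ts_uniq c_dep c_neq0.
have sorted_ts : sorted <%R (sort <=%R ts) by rewrite sort_lt_sorted.
have [pos [xs xs_sub [xs_size xs_alt]]] : exists pos,
    exists2 xs, subseq xs (sort <=%R ts) & size xs = D.+2 /\ alternating c pos xs.
  apply: moment_dep_alternating sorted_ts _ _.
    by move=> j j_le; rewrite (perm_big _ (permEl (perm_sort _ _))) c_dep.
  by rewrite (perm_has _ (permEl (perm_sort _ _))).
have xs_sorted : sorted <%R xs := subseq_sorted lt_trans xs_sub sorted_ts.
have [x [xP xN]] := alternating_radon xs_sorted xs_size xs_alt.
exists [fset t in xs | 0 < c t], [fset t in xs | c t < 0], x; split => //.
- by move=> t; rewrite inE => /andP[].
- by move=> t; rewrite inE => /andP[].
rewrite card_fset_seq ?(lt_sorted_uniq xs_sorted) // -has_count.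
rewrite (has_alternating_gt0 xs_alt) ?xs_size //=.
apply: leq_trans (count_alternating_gt0 xs_alt) _; rewrite xs_size.
by case: pos {xs_alt} => //=; rewrite ltnS uphalf_half leq_addl.
Qed.

Lemma triangulation_conv_disjoint V T P N s x :
  triangulation R D V T -> P \in T -> s \in T -> N `<=` s -> [disjoint P & N] ->
  conv R D P x -> conv R D N x -> False.
Proof.
case=> _ T_card _ T_meet _ PT sT Ns PN xP xN.
have [u [uP us u_conv]] := T_meet P s PT sT.
have xu : conv R D u x := (u_conv x).1 (conj xP (conv_fsubset Ns xN)).
apply: (moment_conv_disjoint (fdisjointWl uP PN) _ xu xN).
by rewrite (leq_trans (fsubset_leq_card _) (andP (T_card s sT)).2) // fsubUset us Ns.
Qed.

End ConvexHulls.

Unset Implicit Arguments.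

Theorem proposition3p3 (R : realType) (D : nat) (V : {fset R})
    (T : {fset {fset R}}) (sigma : {fset R}) (k : nat) :
  (D.+1 <= #|` V |)%N ->
  @triangulation R D V T ->
  sigma `<=` V ->
  #|` sigma | = k.+1 ->
  (uphalf D <= k <= D)%N ->
  (forall tau : {fset R}, tau `<=` sigma -> (0 < #|` tau |)%N ->
     (#|` tau | <= (uphalf D).+1)%N -> tau \in T) ->
  sigma \in T.
Proof.
move=> _ T_tri sigmaV sigma_card _ skeleton; have [_ _ T_face _ T_cover] := T_tri.
have [|w [w_gt0 w1 b_sigma]] := conv_pos_weights D (A := sigma).
  by rewrite sigma_card.
have [s sT [mu [mu_ge0 mu1 w_mu]]] := (T_cover _).1 (conv_fsubset sigmaV b_sigma).
have [sigma_s|/fsubsetPn[t0 t0_sigma t0_s]] := boolP (sigma `<=` s).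
  by apply: T_face sT sigma_s _; rewrite sigma_card.
pose c t := extend0 sigma w t - extend0 s mu t.
have c_neq0 : has (fun t => c t != 0) (sigma `|` s).
  apply/hasP; exists t0; first by rewrite in_fsetU t0_sigma.
  by rewrite /c /extend0 t0_sigma (negbTE t0_s) subr0 gt_eqF ?w_gt0.
have [P [N [x [P_pos N_neg /andP[P_gt0 P_le] xP xN]]]] :=
  moment_dep_radon_uphalf (fset_uniq _) (conv_moment_dep w1 mu1 w_mu) c_neq0.
have PT : P \in T.
  by apply: skeleton P_gt0 P_le; apply/fsubsetP => t /P_pos; apply: extend0_subr_gt0.
exfalso; apply: (triangulation_conv_disjoint T_tri PT sT _ _ xP xN).
  apply/fsubsetP => t /N_neg; apply: extend0_subr_lt0 => u /w_gt0; exact: ltW.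
by apply/fdisjointP => t /P_pos ct; apply/negP => /N_neg; rewrite ltNge ltW.
Qed.
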